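(* Assume $\kappa=\Psi'(h)\neq0$. If $\kappa>0$ then $\sigma'(\tau)>0$ for every $\tau>0$ at which $\sigma$ is defined; if $\kappa<0$ then $\sigma'(\tau)<0$ for every such $\tau>0$.
   Context: Let $h>0$, $\omega\in C^{1,\alpha}(\mathbb R)$, and let $\Psi$ solve $\Psi''+\omega(\Psi)=0$ on $(0,h)$, $\Psi(h)=0$. Let $\mu_1<\mu_2<\cdots$ be the eigenvalues of $-w''-\omega'(\Psi)w=\mu w$ on $(0,h)$ with $w(0)=w(h)=0$. For $\tau\ge0$ with $\tau^2\neq-\mu_j$ for all $j$, $\gamma(y;\tau)$ is the solution of $-\gamma''-\omega'(\Psi(y))\gamma+\tau^2\gamma=0$ on $(0,h)$, $\gamma(0;\tau)=0$, $\gamma(h;\tau)=1$, and $\gamma'$ denotes the $y$-derivative. With $\kappa=\Psi'(h)$ and $\rho_0=\dfrac{1+\Psi'(h)\Psi''(h)}{\Psi'(h)^2}$, the dispersion function is $\sigma(\tau)=\kappa\big(\gamma'(h;\tau)-\rho_0\big)$, defined wherever $\gamma$ is. *)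

From Stdlib Require Import Reals ClassicalEpsilon.
From Coquelicot Require Import Coquelicot.
Open Scope R_scope.

Definition is_derive_on (a b : R) (f : R -> R) (x l : R) : Prop :=
  filterlim (fun y => (f y - f x) / (y - x))
    (within (fun y => a <= y <= b /\ y <> x) (locally x)) (locally l).

Definition twice_diff_on (a b : R) (f f1 f2 : R -> R) : Prop :=
  forall y, a <= y <= b -> is_derive_on a b f y (f1 y) /\ is_derive_on a b f1 y (f2 y).

Definition C1alpha (alpha : R) (w : R -> R) : Prop :=
  (forall x, ex_derive w x) /\ (forall x, continuous (Derive w) x) /\
  (forall a b, exists C, forall x y, a <= x <= b -> a <= y <= b ->
      Rabs (Derive w x - Derive w y) <= C * Rpower (Rabs (x - y)) alpha).

Definition dirichlet_eigenvalue (q : R -> R) (h mu : R) : Prop :=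
  exists w w1 w2 : R -> R,
    twice_diff_on 0 h w w1 w2 /\
    (forall y, 0 < y < h -> - w2 y - q y * w y = mu * w y) /\
    w 0 = 0 /\ w h = 0 /\ (exists y, 0 <= y <= h /\ w y <> 0).

Definition gamma_solution (q : R -> R) (h tau : R) (g g1 g2 : R -> R) : Prop :=
  twice_diff_on 0 h g g1 g2 /\
  (forall y, 0 < y < h -> - g2 y - q y * g y + tau ^ 2 * g y = 0) /\
  g 0 = 0 /\ g h = 1.

(* gamma'(h; tau): the y-derivative at y = h of the (unique, when -tau^2
   is not an eigenvalue) solution gamma(.; tau). *)
Definition gamma_deriv_h (q : R -> R) (h tau : R) : R :=
  epsilon (inhabits 0)
    (fun d => exists g g1 g2, gamma_solution q h tau g g1 g2 /\ g1 h = d).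

Definition dispersion_sigma (q : R -> R) (h kappa rho0 tau : R) : R :=
  kappa * (gamma_deriv_h q h tau - rho0).

From Stdlib Require Import Reals Lra Psatz Factorial ClassicalEpsilon.
From Coquelicot Require Import Coquelicot.
Open Scope R_scope.

(* Extend q continuously to R and let U_l solve U'' = (l - q) U, U(0) = 0, U'(0) = 1
   (a Picard series).  If -tau^2 is not a Dirichlet eigenvalue then U_{tau^2}(h) <> 0,
   gamma(.; tau) = U_{tau^2} / U_{tau^2}(h), and gamma'(h; tau) = F(tau^2) with
   F(l) = U_l'(h) / U_l(h).  The Wronskian identity
     U_l'(h) U_m(h) - U_m'(h) U_l(h) = (l - m) int_0^h U_l U_m
   turns the difference quotient of F at m into int_0^h U_l U_m / (U_l(h) U_m(h)),
   which tends to int_0^h U_m^2 / U_m(h)^2 > 0 because U_l depends continuously on l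
   (a Gronwall energy estimate).  So d/dtau gamma'(h; tau) = 2 tau F'(tau^2) > 0, and
   sigma' = kappa * 2 tau F'(tau^2) has the sign of kappa. *)

Lemma ball_R x e y : ball x e y <-> Rabs (y - x) < e.
Proof. reflexivity. Qed.

Lemma continuous_of_lipschitz_at (f : R -> R) x C d : 0 < d ->
  (forall y, Rabs (y - x) < d -> Rabs (f y - f x) <= C * Rabs (y - x)) ->
  continuous f x.
Proof.
  intros Hd Hf P [eps HP].
  assert (HC : 0 < Rabs C + 1) by (generalize (Rabs_pos C); lra).
  assert (Hde : 0 < Rmin d (eps / (Rabs C + 1))).
  { apply Rmin_pos; [lra | apply Rdiv_lt_0_compat; [apply cond_pos | lra]]. }
  exists (mkposreal _ Hde); intros y Hy; apply HP.
  rewrite ball_R in Hy |- *; simpl in Hy.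
  assert (E1 := Rmin_l d (eps / (Rabs C + 1))).
  assert (E2 := Rmin_r d (eps / (Rabs C + 1))).
  assert (Hyx := Rabs_pos (y - x)). assert (HCa := RRle_abs C).
  apply Rle_lt_trans with ((Rabs C + 1) * Rabs (y - x)).
  - specialize (Hf y ltac:(lra)). nra.
  - apply Rlt_le_trans with ((Rabs C + 1) * (eps / (Rabs C + 1))).
    + apply Rmult_lt_compat_l; lra.
    + right; field; lra.
Qed.

Lemma is_derive_on_spec a b f x l : is_derive_on a b f x l ->
  forall eps, 0 < eps -> exists d, 0 < d /\ forall y, a <= y <= b -> y <> x ->
    Rabs (y - x) < d -> Rabs ((f y - f x) / (y - x) - l) < eps.
Proof.
  intros H eps Heps.
  destruct (H (fun z => Rabs (z - l) < eps)) as [d Hd].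
  { exists (mkposreal eps Heps); auto. }
  exists d; split; [apply cond_pos|]; intros y Hy Hyx Hyd.
  apply (Hd y); auto.
Qed.

Lemma is_derive_of_is_derive_on a b f x l : a < x < b ->
  is_derive_on a b f x l -> is_derive f x l.
Proof.
  intros Hx H; apply is_derive_Reals; intros eps Heps.
  destruct (is_derive_on_spec a b f x l H eps Heps) as [d [Hd Hq]].
  assert (Hm : 0 < Rmin d (Rmin (x - a) (b - x))) by (repeat apply Rmin_pos; lra).
  exists (mkposreal _ Hm); intros k Hk0 Hk; simpl in Hk.
  assert (E1 := Rmin_l d (Rmin (x - a) (b - x))).
  assert (E2 := Rmin_r d (Rmin (x - a) (b - x))).
  assert (E3 := Rmin_l (x - a) (b - x)). assert (E4 := Rmin_r (x - a) (b - x)).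
  destruct (Rabs_def2 _ _ Hk).
  specialize (Hq (x + k)); replace (x + k - x) with k in Hq by ring.
  apply Hq; [lra | intro; apply Hk0; lra | lra].
Qed.

Lemma is_derive_on_of_is_derive a b f x l : is_derive f x l -> is_derive_on a b f x l.
Proof.
  intros H; apply is_derive_Reals in H; intros P [e He].
  destruct (H e (cond_pos e)) as [d Hd].
  exists d; intros y Hy [Hy1 Hy2]; apply He; rewrite ball_R in Hy |- *.
  specialize (Hd (y - x)).
  assert (Ey : x + (y - x) = y :> R) by ring.
  rewrite Ey in Hd; apply Hd; lra.
Qed.

Lemma is_derive_on_lipschitz a b f x l : is_derive_on a b f x l ->
  exists d, 0 < d /\ forall y, a <= y <= b -> Rabs (y - x) < d ->
    Rabs (f y - f x) <= (Rabs l + 1) * Rabs (y - x).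
Proof.
  intros H; destruct (is_derive_on_spec a b f x l H 1 Rlt_0_1) as [d [Hd Hq]].
  exists d; split; auto; intros y Hy Hyd.
  destruct (Req_dec y x) as [->|Hyx].
  { rewrite !Rminus_eq_0, Rabs_R0; lra. }
  specialize (Hq y Hy Hyx Hyd).
  replace (f y - f x) with (((f y - f x) / (y - x) - l) * (y - x) + l * (y - x))
    by (field; lra).
  eapply Rle_trans; [apply Rabs_triang|]; rewrite !Rabs_mult.
  generalize (Rabs_pos (y - x)); nra.
Qed.

(* Clamping the argument extends a function known only on [a,b] to all of R. *)
Definition clamp (a b x : R) := Rmax a (Rmin b x).

Lemma clamp_in a b x : a <= b -> a <= clamp a b x <= b.
Proof. intros; unfold clamp, Rmax, Rmin; repeat destruct Rle_dec; lra. Qed.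

Lemma clamp_id a b x : a <= x <= b -> clamp a b x = x.
Proof. intros; unfold clamp, Rmax, Rmin; repeat destruct Rle_dec; lra. Qed.

Lemma clamp_lipschitz a b x y : a <= b -> Rabs (clamp a b y - clamp a b x) <= Rabs (y - x).
Proof.
  intros; unfold clamp, Rmax, Rmin; repeat destruct Rle_dec;
  unfold Rabs; repeat destruct Rcase_abs; lra.
Qed.

Lemma continuous_clamp a b x : a <= b -> continuous (clamp a b) x.
Proof.
  intros Hab; apply (continuous_of_lipschitz_at _ x 1 1); [lra|].
  intros y _; rewrite Rmult_1_l; apply clamp_lipschitz, Hab.
Qed.

Lemma continuous_comp_clamp a b f f1 : a <= b ->
  (forall x, a <= x <= b -> is_derive_on a b f x (f1 x)) ->
  forall x, continuous (fun y => f (clamp a b y)) x.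
Proof.
  intros Hab Hf x.
  destruct (is_derive_on_lipschitz _ _ _ _ _ (Hf _ (clamp_in a b x Hab))) as [d [Hd Hl]].
  apply (continuous_of_lipschitz_at _ x (Rabs (f1 (clamp a b x)) + 1) d Hd).
  intros y Hy.
  assert (Hc := clamp_lipschitz a b x y Hab).
  eapply Rle_trans; [apply Hl; [apply clamp_in, Hab | lra]|].
  apply Rmult_le_compat_l; [generalize (Rabs_pos (f1 (clamp a b x))); lra | exact Hc].
Qed.

Lemma clamped_extension (a b : R) (q : R -> R) : a <= b ->
  (forall x, continuous (fun y => q (clamp a b y)) x) ->
  exists (qt : R -> R) (Q : R), (forall y, a <= y <= b -> qt y = q y) /\
    (forall x, continuous qt x) /\ (forall x, Rabs (qt x) <= Q).
Proof.
  intros Hab Hc.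
  destruct (continuity_ab_maj (fun s => Rabs (q (clamp a b s))) a b Hab) as [m [Hm _]].
  { intros c _; apply continuity_pt_filterlim, (continuous_comp (fun s => q (clamp a b s)) Rabs);
      [apply Hc | apply continuous_Rabs]. }
  exists (fun s => q (clamp a b s)), (Rabs (q (clamp a b m))); split; [| split; [exact Hc |]].
  - intros y Hy; rewrite clamp_id by exact Hy; reflexivity.
  - intros x; rewrite <- (clamp_id a b (clamp a b x)) by (apply clamp_in, Hab).
    apply Hm, clamp_in, Hab.
Qed.

Lemma eq_of_derive_zero_on_segment a b f : a < b ->
  (forall x, continuous (fun y => f (clamp a b y)) x) ->
  (forall x, a < x < b -> is_derive f x 0) -> f b = f a.
Proof.
  intros Hab Hc Hd.
  destruct (MVT_gen (fun y => f (clamp a b y)) a b (fun _ => 0)) as [z [_ Hz]].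
  - intros x Hx; rewrite Rmin_left, Rmax_right in Hx by lra.
    apply (is_derive_ext_loc f); [| apply Hd, Hx].
    assert (Hm : 0 < Rmin (x - a) (b - x)) by (apply Rmin_pos; lra).
    exists (mkposreal _ Hm); intros y Hy; rewrite ball_R in Hy; simpl in Hy.
    generalize (Rmin_l (x - a) (b - x)) (Rmin_r (x - a) (b - x)); intros.
    destruct (Rabs_def2 _ _ Hy); rewrite clamp_id; [reflexivity | lra].
  - intros x _; apply continuity_pt_filterlim, Hc.
  - rewrite !clamp_id in Hz by lra; lra.
Qed.

Lemma ex_RInt_of_continuous (g : R -> R) a b : (forall z, continuous g z) -> ex_RInt g a b.
Proof. intros Hg; apply (ex_RInt_continuous (V := R_CompleteNormedModule)); intros; apply Hg. Qed.

Lemma is_derive_RInt_0 (g : R -> R) x : (forall z, continuous g z) ->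
  is_derive (fun y => RInt g 0 y) x (g x).
Proof.
  intros Hg; apply is_derive_RInt with (a := 0); [| apply Hg].
  apply filter_forall; intros b; apply RInt_correct, ex_RInt_of_continuous, Hg.
Qed.

Lemma continuous_of_is_derive (f : R -> R) x l : is_derive f x l -> continuous f x.
Proof. intros H; apply (ex_derive_continuous (V := R_NormedModule)); exists l; exact H. Qed.

Lemma abs_RInt_0_le_pow_nonneg (g : R -> R) C n y : 0 <= y ->
  (forall z, continuous g z) -> (forall s, 0 <= s <= y -> Rabs (g s) <= C * s ^ n) ->
  Rabs (RInt g 0 y) <= C * y ^ S n / INR (S n).
Proof.
  intros Hy Hg Hb.
  assert (Hpow : is_RInt (fun s => C * s ^ n) 0 y (C * y ^ S n / INR (S n))).
  { assert (H := is_RInt_scal _ _ _ C _ (is_RInt_pow 0 y n)).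
    rewrite pow_i, Rdiv_0_l, Rminus_0_r in H by lia.
    replace (C * y ^ S n / INR (S n)) with (scal C (y ^ S n / INR (S n))) by (unfold scal; simpl; unfold mult; simpl; unfold Rdiv; ring).
    exact H. }
  eapply Rle_trans; [apply abs_RInt_le; [exact Hy | apply ex_RInt_of_continuous, Hg]|].
  rewrite <- (is_RInt_unique _ _ _ _ Hpow).
  apply RInt_le; [exact Hy | | eexists; exact Hpow |].
  - apply ex_RInt_of_continuous; intros z; apply continuous_comp; [apply Hg | apply continuous_Rabs].
  - intros s Hs; apply Hb; lra.
Qed.

Lemma abs_RInt_0_le_pow (g : R -> R) C n y :
  (forall z, continuous g z) ->
  (forall s, Rmin 0 y <= s <= Rmax 0 y -> Rabs (g s) <= C * Rabs s ^ n) ->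
  Rabs (RInt g 0 y) <= C * Rabs y ^ S n / INR (S n).
Proof.
  intros Hg Hb; destruct (Rle_dec 0 y) as [Hy|Hy].
  - rewrite (Rabs_pos_eq y) by exact Hy.
    apply abs_RInt_0_le_pow_nonneg; [exact Hy | exact Hg|].
    intros s Hs; rewrite <- (Rabs_pos_eq s) at 2 by lra.
    apply Hb; rewrite Rmin_left, Rmax_right; lra.
  - (* reflect [y, 0] onto [0, -y] *)
    assert (Hrefl : RInt (fun s => - g (- s)) 0 (- y) = RInt g 0 y).
    { apply (is_RInt_unique (V := R_CompleteNormedModule)), (is_RInt_comp_opp g).
      rewrite Ropp_0, Ropp_involutive.
      apply (RInt_correct (V := R_CompleteNormedModule)), ex_RInt_of_continuous, Hg. }
    rewrite <- Hrefl, (Rabs_left y) by lra.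
    apply abs_RInt_0_le_pow_nonneg; [lra | |].
    + intros z; apply (continuous_opp (V := R_NormedModule) (fun s => g (- s))).
      apply (continuous_comp Ropp g); [| apply Hg].
      apply (continuous_opp (V := R_NormedModule) (fun s => s)), continuous_id.
    + intros s Hs; rewrite Rabs_Ropp.
      replace (s ^ n) with (Rabs (- s) ^ n) by (rewrite Rabs_Ropp, Rabs_pos_eq by lra; reflexivity).
      apply Hb; rewrite Rmin_right, Rmax_left; lra.
Qed.

(* Terms of the Picard series of U' = V, V' = p U, U(0) = 0, V(0) = 1:
   U is the sum of the [picard_U p k] and V the sum of the [picard_V p k]. *)
Fixpoint picard_V (p : R -> R) (k : nat) : R -> R :=
  match k with
  | O => fun _ => 1
  | S k => fun y => RInt (fun s => p s * RInt (picard_V p k) 0 s) 0 y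
  end.

Definition picard_U (p : R -> R) (k : nat) (y : R) : R := RInt (picard_V p k) 0 y.

Lemma le_div_fact_mul (A : R) (k m : nat) : 0 <= A -> (S k <= m)%nat ->
  A / INR (fact k) / INR m <= A / INR (fact (S k)).
Proof.
  intros HA Hm.
  assert (Hf := INR_fact_lt_0 k).
  assert (Hk : INR (S k) <= INR m) by (apply le_INR; exact Hm).
  assert (HSk : 0 < INR (S k)) by (apply lt_0_INR; lia).
  rewrite fact_simpl, mult_INR; unfold Rdiv; rewrite Rmult_assoc, <- Rinv_mult.
  apply Rmult_le_compat_l; [exact HA|]; apply Rinv_le_contravar; nra.
Qed.

Section PicardSeries.

Variables (p : R -> R) (M : R).
Hypothesis p_cont : forall x, continuous p x.
Hypothesis p_bound : forall x, Rabs (p x) <= M.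

Lemma continuous_picard_V k x : continuous (picard_V p k) x.
Proof.
  revert x; induction k as [|k IH]; intros x; [apply continuous_const|].
  apply (continuous_of_is_derive _ x (p x * picard_U p k x)).
  apply (is_derive_RInt_0 (fun s => p s * picard_U p k s)); intros z.
  apply (continuous_mult (K := R_AbsRing)); [apply p_cont|].
  apply (continuous_of_is_derive _ z (picard_V p k z)), is_derive_RInt_0, IH.
Qed.

Lemma is_derive_picard_U k x : is_derive (picard_U p k) x (picard_V p k x).
Proof. apply is_derive_RInt_0; intros; apply continuous_picard_V. Qed.

Lemma is_derive_picard_V k x : is_derive (picard_V p (S k)) x (p x * picard_U p k x).
Proof.
  apply (is_derive_RInt_0 (fun s => p s * picard_U p k s)); intros z.
  apply (continuous_mult (K := R_AbsRing)); [apply p_cont|].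
  apply (continuous_of_is_derive _ z _ (is_derive_picard_U k z)).
Qed.

Lemma picard_U_bound k y :
  (forall s, Rabs (picard_V p k s) <= M ^ k * Rabs s ^ (2 * k) / INR (fact k)) ->
  Rabs (picard_U p k y) <= M ^ k * Rabs y ^ S (2 * k) / INR (fact k).
Proof.
  intros HV.
  assert (HM : 0 <= M) by (generalize (p_bound 0) (Rabs_pos (p 0)); lra).
  assert (Hf := INR_fact_lt_0 k).
  assert (HA : 0 <= M ^ k / INR (fact k) * Rabs y ^ S (2 * k)).
  { apply Rmult_le_pos; [apply Rmult_le_pos; [apply pow_le, HM | left; apply Rinv_0_lt_compat, Hf]|].
    apply pow_le, Rabs_pos. }
  eapply Rle_trans; [apply (abs_RInt_0_le_pow _ (M ^ k / INR (fact k)) (2 * k))|].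
  - apply continuous_picard_V.
  - intros s _; eapply Rle_trans; [apply HV | right; unfold Rdiv; ring].
  - assert (H1 : 1 <= INR (S (2 * k))) by (apply (le_INR 1); lia).
    apply Rle_trans with (M ^ k / INR (fact k) * Rabs y ^ S (2 * k) / 1).
    + unfold Rdiv at 2 3; apply Rmult_le_compat_l; [exact HA | apply Rinv_le_contravar; lra].
    + right; field; lra.
Qed.

Lemma picard_bound k y :
  Rabs (picard_V p k y) <= M ^ k * Rabs y ^ (2 * k) / INR (fact k) /\
  Rabs (picard_U p k y) <= M ^ k * Rabs y ^ S (2 * k) / INR (fact k).
Proof.
  assert (HM : 0 <= M) by (generalize (p_bound 0) (Rabs_pos (p 0)); lra).
  enough (HV : forall s, Rabs (picard_V p k s) <= M ^ k * Rabs s ^ (2 * k) / INR (fact k))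
    by (split; [apply HV | apply picard_U_bound, HV]).
  induction k as [|k IH]; intros s.
  - simpl; rewrite Rabs_R1; lra.
  - eapply Rle_trans.
    { apply (abs_RInt_0_le_pow (fun t => p t * picard_U p k t) (M ^ S k / INR (fact k)) (S (2 * k))).
      - intros z; apply (continuous_mult (K := R_AbsRing)); [apply p_cont|].
        apply (continuous_of_is_derive _ z _ (is_derive_picard_U k z)).
      - intros t _; rewrite Rabs_mult.
        apply Rle_trans with (M * (M ^ k * Rabs t ^ S (2 * k) / INR (fact k))).
        + apply Rmult_le_compat; [apply Rabs_pos | apply Rabs_pos | apply p_bound | apply picard_U_bound, IH].
        + right; simpl; field; apply INR_fact_neq_0. }
    replace (2 * S k)%nat with (S (S (2 * k))) by lia.
    replace (M ^ S k / INR (fact k) * Rabs s ^ S (S (2 * k)))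
      with (M ^ S k * Rabs s ^ S (S (2 * k)) / INR (fact k)) by (field; apply INR_fact_neq_0).
    apply le_div_fact_mul; [| lia].
    apply Rmult_le_pos; apply pow_le; [exact HM | apply Rabs_pos].
Qed.

Lemma picard_bound_ball r k y : Rabs y <= r ->
  Rabs (picard_V p k y) <= (M * r ^ 2) ^ k / INR (fact k) /\
  Rabs (picard_U p k y) <= r * ((M * r ^ 2) ^ k / INR (fact k)).
Proof.
  intros Hy; destruct (picard_bound k y) as [HV HU].
  assert (HM : 0 <= M) by (generalize (p_bound 0) (Rabs_pos (p 0)); lra).
  assert (Hf := INR_fact_lt_0 k). assert (Hy0 := Rabs_pos y).
  assert (Hpow : Rabs y ^ (2 * k) <= r ^ (2 * k)) by (apply pow_incr; lra).
  assert (Hpow0 : 0 <= Rabs y ^ (2 * k)) by (apply pow_le; lra).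
  assert (HMk : 0 <= M ^ k) by (apply pow_le; lra).
  assert (HB : M ^ k * Rabs y ^ (2 * k) / INR (fact k) <= (M * r ^ 2) ^ k / INR (fact k)).
  { rewrite Rpow_mult_distr, <- pow_mult.
    unfold Rdiv; apply Rmult_le_compat_r; [left; apply Rinv_0_lt_compat, Hf|].
    apply Rmult_le_compat_l; lra. }
  split; [lra|].
  eapply Rle_trans; [exact HU|].
  replace (M ^ k * Rabs y ^ S (2 * k) / INR (fact k))
    with (Rabs y * (M ^ k * Rabs y ^ (2 * k) / INR (fact k))) by (simpl; field; lra).
  apply Rmult_le_compat; [lra | | exact Hy | exact HB].
  apply Rmult_le_pos; [nra | left; apply Rinv_0_lt_compat, Hf].
Qed.

End PicardSeries.

Lemma is_series_exp_scaled c K :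
  is_series (fun k => c * (K ^ k / INR (fact k))) (c * exp K).
Proof.
  assert (H : is_series (fun k => / INR (fact k) * K ^ k) (exp K))
    by (apply is_series_Reals, E1_cvg).
  apply (is_series_scal_l c) in H.
  eapply is_series_ext; [| exact H]; intros k.
  unfold scal; simpl; unfold mult; simpl; unfold Rdiv; ring.
Qed.

Lemma ex_series_exp_bound (a : nat -> R) c K :
  (forall k, Rabs (a k) <= c * (K ^ k / INR (fact k))) -> ex_series a.
Proof.
  intros Ha; apply (ex_series_le (V := R_CompleteNormedModule) _ _ Ha).
  eexists; apply is_series_exp_scaled.
Qed.

Lemma CVN_r_exp_bound (f : nat -> R -> R) (r : posreal) c K : 0 <= c -> 0 <= K ->
  (forall k y, Rabs y < r -> Rabs (f k y) <= c * (K ^ k / INR (fact k))) -> CVN_r f r.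
Proof.
  intros Hc HK Hf.
  exists (fun k => c * (K ^ k / INR (fact k))), (c * exp K); split.
  - apply is_series_Reals; eapply is_series_ext; [| apply is_series_exp_scaled].
    intros k; rewrite Rabs_pos_eq; [reflexivity|].
    apply Rmult_le_pos; [exact Hc|].
    apply Rmult_le_pos; [apply pow_le, HK | left; apply Rinv_0_lt_compat, INR_fact_lt_0].
  - intros k y Hy; apply Hf; unfold Boule in Hy; rewrite Rminus_0_r in Hy; exact Hy.
Qed.

Lemma is_derive_Series (f f' : nat -> R -> R) :
  (forall k x, is_derive (f k) x (f' k x)) ->
  (forall x, ex_series (fun k => f k x)) ->
  (forall r : posreal, CVN_r f' r) ->
  forall x, is_derive (fun y => Series (fun k => f k y)) x (Series (fun k => f' k x)).
Proof.
  intros Hd Hs Hn x.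
  assert (Hr : 0 < Rabs x + 1) by (generalize (Rabs_pos x); lra).
  destruct (CVN_CVU_r f' (mkposreal _ Hr) (Hn _) x ltac:(simpl; lra)) as [e He].
  apply is_derive_Reals.
  apply (CVU_derivable (fun n => SP f n) (fun n => SP f' n) _ _ x e He).
  - intros y _; apply is_series_Reals, Series_correct, Hs.
  - intros n y _; induction n as [|n IH]; unfold SP in *; simpl.
    + apply is_derive_Reals, Hd.
    + apply derivable_pt_lim_plus; [exact IH | apply is_derive_Reals, Hd].
  - unfold Boule; rewrite Rminus_eq_0, Rabs_R0; apply cond_pos.
Qed.

Lemma Series_zero (a : nat -> R) : (forall k, a k = 0) -> Series a = 0.
Proof.
  intros Ha; rewrite (Series_ext _ (fun k => 0 * a k)) by (intros k; rewrite Ha; ring).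
  rewrite Series_scal_l; ring.
Qed.

Theorem linear_ode_solution_exists (p : R -> R) (M : R) :
  (forall x, continuous p x) -> (forall x, Rabs (p x) <= M) ->
  exists U V : R -> R, (forall x, is_derive U x (V x)) /\
    (forall x, is_derive V x (p x * U x)) /\ U 0 = 0 /\ V 0 = 1.
Proof.
  intros Hp HM.
  assert (HM0 : 0 <= M) by (generalize (HM 0) (Rabs_pos (p 0)); lra).
  assert (HK : forall r, 0 <= M * r ^ 2) by (intros; apply Rmult_le_pos; [exact HM0 | apply pow2_ge_0]).
  assert (Hball := fun r k y Hy => picard_bound_ball p M Hp HM r k y Hy).
  assert (HsU : forall x, ex_series (fun k => picard_U p k x)).
  { intros x; apply (ex_series_exp_bound _ (Rabs x) (M * Rabs x ^ 2)); intros k.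
    apply Hball; lra. }
  assert (HsV : forall x, ex_series (fun k => picard_V p k x)).
  { intros x; apply (ex_series_exp_bound _ 1 (M * Rabs x ^ 2)); intros k.
    rewrite Rmult_1_l; apply Hball; lra. }
  exists (fun x => Series (fun k => picard_U p k x)), (fun x => Series (fun k => picard_V p k x)).
  split; [| split; [| split]].
  - apply is_derive_Series; [apply is_derive_picard_U, Hp | exact HsU|].
    intros r; apply (CVN_r_exp_bound _ r 1 (M * r ^ 2)); [lra | apply HK|].
    intros k y Hy; rewrite Rmult_1_l; apply Hball; lra.
  - intros x.
    apply (is_derive_ext (fun y => 1 + Series (fun k => picard_V p (S k) y))).
    { intros y; rewrite (Series_incr_1 _ (HsV y)); reflexivity. }
    rewrite <- Series_scal_l, <- (Rplus_0_l (Series _)).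
    apply (is_derive_plus (fun _ => 1)); [apply is_derive_Reals, derivable_pt_lim_const|].
    apply (is_derive_Series (fun k => picard_V p (S k)) (fun k y => p y * picard_U p k y)).
    + apply is_derive_picard_V, Hp.
    + intros y; apply (proj1 (ex_series_incr_1 (fun k => picard_V p k y))), HsV.
    + intros r; assert (Hr := cond_pos r).
      apply (CVN_r_exp_bound _ r (M * r) (M * r ^ 2)); [nra | apply HK|].
      intros k y Hy; rewrite Rabs_mult, Rmult_assoc.
      apply Rmult_le_compat; [apply Rabs_pos | apply Rabs_pos | apply HM | apply Hball; lra].
  - apply Series_zero; intros k; apply (RInt_point (V := R_CompleteNormedModule)).
  - rewrite Series_incr_1 by apply HsV.
    rewrite Series_zero; [simpl; ring|]; intros k; apply (RInt_point (V := R_CompleteNormedModule)).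
Qed.

Lemma exp_le_compat x y : x <= y -> exp x <= exp y.
Proof. intros [H|H]; [left; apply exp_increasing, H | rewrite H; right; reflexivity]. Qed.

Lemma gronwall_affine (E dE : R -> R) (c F y : R) :
  0 <= c -> 0 <= F -> 0 <= y ->
  (forall t, 0 <= t <= y -> is_derive E t (dE t)) ->
  (forall t, 0 <= t <= y -> dE t <= c * E t + F) ->
  E y <= (E 0 + F * y) * exp (c * y).
Proof.
  intros Hc HF Hy Hd Hb.
  (* G is nonincreasing. *)
  set (G := fun t => E t * exp (- c * t) - F * t).
  set (dG := fun t => dE t * exp (- c * t) + E t * (- c * exp (- c * t)) - F).
  assert (HG : forall t, 0 <= t <= y -> is_derive G t (dG t)).
  { intros t Ht; unfold G, dG.
    apply (is_derive_minus (fun t => E t * exp (- c * t)) (fun t => F * t)).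
    - apply (is_derive_mult E (fun t => exp (- c * t))); [apply Hd, Ht | | intros; apply Rmult_comm].
      auto_derive; auto; ring.
    - auto_derive; auto; ring. }
  destruct (MVT_gen G 0 y dG) as [z [Hz HGz]].
  - intros x Hx; rewrite Rmin_left, Rmax_right in Hx by lra; apply HG; lra.
  - intros x Hx; rewrite Rmin_left, Rmax_right in Hx by lra.
    apply continuity_pt_filterlim, (continuous_of_is_derive _ _ _ (HG x Hx)).
  - rewrite Rmin_left, Rmax_right in Hz by lra.
    assert (HdG : dG z <= 0).
    { unfold dG; specialize (Hb z Hz).
      assert (He : 0 < exp (- c * z)) by apply exp_pos.
      assert (He1 : exp (- c * z) <= 1).
      { rewrite <- exp_0; apply exp_le_compat; nra. }
      replace (dE z * exp (- c * z) + E z * (- c * exp (- c * z)) - F)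
        with ((dE z - c * E z) * exp (- c * z) - F) by ring.
      nra. }
    assert (HGy : G y <= G 0) by nra.
    unfold G in HGy; replace (- c * 0) with 0 in HGy by ring; rewrite exp_0 in HGy.
    assert (Hpos : 0 < exp (c * y)) by apply exp_pos.
    assert (Hinv : exp (- c * y) * exp (c * y) = 1).
    { rewrite <- exp_plus; replace (- c * y + c * y) with 0 by ring; apply exp_0. }
    replace (E y) with (E y * exp (- c * y) * exp (c * y)) by (rewrite Rmult_assoc, Hinv; ring).
    apply Rmult_le_compat_r; lra.
Qed.

(* Gronwall applied to d^2 + e^2. *)
Lemma energy_estimate (d e p0 f : R -> R) (M F y : R) :
  0 <= M -> 0 <= F -> 0 <= y ->
  (forall t, 0 <= t <= y -> is_derive d t (e t)) ->
  (forall t, 0 <= t <= y -> is_derive e t (p0 t * d t + f t)) ->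
  (forall t, 0 <= t <= y -> Rabs (p0 t) <= M) ->
  (forall t, 0 <= t <= y -> f t ^ 2 <= F) ->
  d y ^ 2 + e y ^ 2 <= (d 0 ^ 2 + e 0 ^ 2 + F * y) * exp ((2 + M) * y).
Proof.
  intros HM HF Hy Hd He Hp Hf.
  apply (gronwall_affine (fun t => d t ^ 2 + e t ^ 2)
          (fun t => 2 * d t * e t + 2 * e t * (p0 t * d t + f t))); [lra | exact HF | exact Hy | |].
  - intros t Ht; apply (is_derive_plus (fun t => d t ^ 2) (fun t => e t ^ 2)).
    + replace (2 * d t * e t) with (INR 2 * e t * d t ^ 1) by (simpl; ring).
      apply (is_derive_pow d 2 t (e t)), Hd, Ht.
    + replace (2 * e t * (p0 t * d t + f t)) with (INR 2 * (p0 t * d t + f t) * e t ^ 1)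
        by (simpl; ring).
      apply (is_derive_pow e 2 t), He, Ht.
  - intros t Ht; specialize (Hp t Ht); specialize (Hf t Ht).
    set (a := d t) in *; set (b := e t) in *; set (c := p0 t) in *; set (g := f t) in *.
    assert (H1 : 2 * a * b <= a ^ 2 + b ^ 2) by (generalize (pow2_ge_0 (a - b)); nra).
    assert (H2 : 2 * b * g <= b ^ 2 + g ^ 2) by (generalize (pow2_ge_0 (b - g)); nra).
    assert (H3 : 2 * b * c * a <= M * (a ^ 2 + b ^ 2)).
    { apply Rle_trans with (Rabs c * (a ^ 2 + b ^ 2)).
      - generalize (pow2_ge_0 (a - b)) (pow2_ge_0 (a + b)).
        destruct (Rle_dec 0 c); [rewrite Rabs_pos_eq | rewrite Rabs_left]; nra.
      - apply Rmult_le_compat_r; [generalize (pow2_ge_0 a) (pow2_ge_0 b); lra | exact Hp]. }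
    cbv beta; fold a b c g; nra.
Qed.

Lemma gamma_solution_slope (q qt : R -> R) (h tau : R) (U V g g1 g2 : R -> R) :
  0 < h -> (forall y, 0 <= y <= h -> qt y = q y) ->
  (forall x, is_derive U x (V x)) -> (forall x, is_derive V x ((tau ^ 2 - qt x) * U x)) ->
  U 0 = 0 -> V 0 = 1 ->
  gamma_solution q h tau g g1 g2 -> g1 h * U h = V h.
Proof.
  intros Hh Hq HU HV U0 V0 [Hg [Hode [Hg0 Hgh]]].
  set (W := fun y => g1 y * U y - V y * g y).
  assert (HW : W h = W 0).
  { apply eq_of_derive_zero_on_segment; [exact Hh | |].
    - assert (Hc : forall f : R -> R, (forall x, continuous f x) ->
                   forall x, continuous (fun y => f (clamp 0 h y)) x).
      { intros f Hf x; apply continuous_comp; [apply continuous_clamp; lra | apply Hf]. }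
      assert (Hg0c := continuous_comp_clamp 0 h g g1 ltac:(lra) (fun x Hx => proj1 (Hg x Hx))).
      assert (Hg1c := continuous_comp_clamp 0 h g1 g2 ltac:(lra) (fun x Hx => proj2 (Hg x Hx))).
      intros x; unfold W.
      apply (continuous_minus (V := R_NormedModule)); apply (continuous_mult (K := R_AbsRing)).
      + apply Hg1c.
      + apply Hc; intros; apply (continuous_of_is_derive _ _ _ (HU _)).
      + apply Hc; intros; apply (continuous_of_is_derive _ _ _ (HV _)).
      + apply Hg0c.
    - intros y Hy.
      assert (Dg : is_derive g y (g1 y)) by (apply (is_derive_of_is_derive_on 0 h); [exact Hy | apply Hg; lra]).
      assert (Dg1 : is_derive g1 y (g2 y)) by (apply (is_derive_of_is_derive_on 0 h); [exact Hy | apply Hg; lra]).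
      replace 0 with (g2 y * U y + g1 y * V y - ((tau ^ 2 - qt y) * U y * g y + V y * g1 y))
        by (specialize (Hode y Hy); rewrite Hq by lra; nra).
      apply (is_derive_minus (fun y => g1 y * U y) (fun y => V y * g y));
        apply (is_derive_mult _ _ y); auto; intros; apply Rmult_comm. }
  unfold W in HW; rewrite U0, V0, Hg0, Hgh in HW; lra.
Qed.

Lemma gamma_deriv_h_eq (q qt : R -> R) (h tau : R) (U V : R -> R) :
  0 < h -> (forall y, 0 <= y <= h -> qt y = q y) ->
  (forall x, is_derive U x (V x)) -> (forall x, is_derive V x ((tau ^ 2 - qt x) * U x)) ->
  U 0 = 0 -> V 0 = 1 -> U h <> 0 ->
  gamma_deriv_h q h tau = V h / U h.
Proof.
  intros Hh Hq HU HV U0 V0 Uh.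
  unfold gamma_deriv_h.
  match goal with |- epsilon ?i ?P = _ => assert (HP : exists d, P d) end.
  { exists (V h / U h), (fun y => / U h * U y), (fun y => / U h * V y),
      (fun y => / U h * ((tau ^ 2 - qt y) * U y)).
    split; [| unfold Rdiv; ring]; split; [| split; [| split]].
    - intros y _; split; apply is_derive_on_of_is_derive, is_derive_scal; [apply HU | apply HV].
    - intros y Hy; rewrite Hq by lra; ring.
    - rewrite U0; ring.
    - field; exact Uh. }
  destruct (epsilon_spec (inhabits 0) _ HP) as [g [g1 [g2 [Hs <-]]]].
  assert (Hw := gamma_solution_slope q qt h tau U V g g1 g2 Hh Hq HU HV U0 V0 Hs).
  field_simplify_eq; [lra | exact Uh].
Qed.

Lemma dirichlet_eigenvalue_of_zero (q qt : R -> R) (h tau : R) (U V : R -> R) :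
  (forall y, 0 <= y <= h -> qt y = q y) ->
  (forall x, is_derive U x (V x)) -> (forall x, is_derive V x ((tau ^ 2 - qt x) * U x)) ->
  U 0 = 0 -> (exists y, 0 <= y <= h /\ U y <> 0) -> U h = 0 ->
  dirichlet_eigenvalue q h (- tau ^ 2).
Proof.
  intros Hq HU HV U0 Hnz Uh.
  exists U, V, (fun y => (tau ^ 2 - qt y) * U y).
  split; [| split; [| split; [| split]]]; auto.
  - intros y _; split; apply is_derive_on_of_is_derive; [apply HU | apply HV].
  - intros y Hy; rewrite Hq by lra; ring.
Qed.

Lemma is_derive_of_difference_quotient (f g : R -> R) x :
  locally x (fun y => y <> x -> (f y - f x) / (y - x) = g y) -> continuous g x ->
  is_derive f x (g x).
Proof.
  intros [d1 Hq] Hg; apply is_derive_Reals; intros eps Heps.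
  destruct (Hg (fun z => Rabs (z - g x) < eps)) as [d2 Hd2].
  { exists (mkposreal eps Heps); auto. }
  assert (Hd : 0 < Rmin d1 d2) by (apply Rmin_pos; apply cond_pos).
  exists (mkposreal _ Hd); intros k Hk0 Hk; simpl in Hk.
  assert (Hball : forall e : posreal, Rmin d1 d2 <= e -> ball x e (x + k)).
  { intros e He; rewrite ball_R; replace (x + k - x) with k by ring; lra. }
  specialize (Hq (x + k) (Hball _ (Rmin_l _ _)) ltac:(intro; apply Hk0; lra)).
  replace (x + k - x) with k in Hq by ring; rewrite Hq.
  apply Hd2, Hball, Rmin_r.
Qed.

Lemma locally_neq_0 (f : R -> R) x : continuous f x -> f x <> 0 ->
  locally x (fun y => f y <> 0).
Proof.
  intros Hc Hx; apply (Hc (fun z => z <> 0)).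
  exists (mkposreal _ (Rabs_pos_lt _ Hx)); intros z Hz E.
  rewrite ball_R in Hz; simpl in Hz; rewrite E, Rminus_0_l, Rabs_Ropp in Hz; lra.
Qed.

Lemma pos_right_of_is_derive (f : R -> R) x l : f x = 0 -> is_derive f x l -> 0 < l ->
  exists d, 0 < d /\ forall y, x < y < x + d -> 0 < f y.
Proof.
  intros Hx Hd Hl; apply is_derive_Reals in Hd.
  destruct (Hd (l / 2)) as [d Hq]; [lra|].
  exists d; split; [apply cond_pos|]; intros y Hy.
  specialize (Hq (y - x)); replace (x + (y - x)) with y in Hq by ring.
  rewrite Hx, Rminus_0_r in Hq.
  destruct (Rabs_def2 _ _ (Hq ltac:(lra) ltac:(rewrite Rabs_pos_eq; lra))) as [_ Hq'].
  replace (f y) with (f y / (y - x) * (y - x)) by (field; lra); nra.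
Qed.

Lemma Rabs_le_mul_sqrt (a b c : R) : 0 <= c -> a ^ 2 <= b ^ 2 * c -> Rabs a <= Rabs b * sqrt c.
Proof.
  intros Hc H; rewrite <- !sqrt_Rsqr_abs, <- sqrt_mult_alt by apply Rle_0_sqr.
  apply sqrt_le_1_alt; unfold Rsqr; simpl in H; lra.
Qed.

Section ParameterFamily.

Variables (h Q : R) (qt : R -> R) (U V : R -> R -> R).
Hypothesis h_pos : 0 < h.
Hypothesis qt_bound : forall x, Rabs (qt x) <= Q.
Hypothesis U_deriv : forall l x, is_derive (U l) x (V l x).
Hypothesis V_deriv : forall l x, is_derive (V l) x ((l - qt x) * U l x).
Hypothesis U_0 : forall l, U l 0 = 0.
Hypothesis V_0 : forall l, V l 0 = 1.

Lemma family_coef_bound l x : Rabs (l - qt x) <= Rabs l + Q.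
Proof.
  unfold Rminus; eapply Rle_trans; [apply Rabs_triang|].
  rewrite Rabs_Ropp; generalize (qt_bound x); lra.
Qed.

Lemma family_energy l y : 0 <= y -> U l y ^ 2 + V l y ^ 2 <= exp ((2 + (Rabs l + Q)) * y).
Proof.
  intros Hy.
  assert (HQ : 0 <= Q) by (generalize (qt_bound 0) (Rabs_pos (qt 0)); lra).
  assert (E := energy_estimate (U l) (V l) (fun s => l - qt s) (fun _ => 0) (Rabs l + Q) 0 y).
  rewrite U_0, V_0 in E; replace ((0 ^ 2 + 1 ^ 2 + 0 * y)) with 1 in E by ring.
  rewrite <- (Rmult_1_l (exp _)); apply E; [generalize (Rabs_pos l); lra | lra | exact Hy | | | | ].
  - intros; apply U_deriv.
  - intros t _; rewrite Rplus_0_r; apply V_deriv.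
  - intros t _; apply family_coef_bound.
  - intros t _; simpl; lra.
Qed.

Lemma family_bounded l0 : exists K, 0 <= K /\
  forall l y, Rabs (l - l0) <= 1 -> 0 <= y <= h -> Rabs (U l y) <= K.
Proof.
  exists (sqrt (exp ((3 + Rabs l0 + Q) * h))); split; [apply sqrt_pos|].
  intros l y Hl Hy.
  assert (HQ : 0 <= Q) by (generalize (qt_bound 0) (Rabs_pos (qt 0)); lra).
  assert (Hl' : Rabs l <= Rabs l0 + 1).
  { replace l with ((l - l0) + l0) by ring; eapply Rle_trans; [apply Rabs_triang | lra]. }
  rewrite <- (Rmult_1_l (sqrt _)), <- Rabs_R1.
  apply Rabs_le_mul_sqrt; [left; apply exp_pos|].
  assert (E := family_energy l y (proj1 Hy)).
  assert (Hexp : exp ((2 + (Rabs l + Q)) * y) <= exp ((3 + Rabs l0 + Q) * h)).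
  { apply exp_le_compat; generalize (Rabs_pos l); nra. }
  generalize (pow2_ge_0 (V l y)); simpl; lra.
Qed.

Lemma family_lipschitz l0 : exists C, 0 <= C /\
  forall l y, Rabs (l - l0) <= 1 -> 0 <= y <= h -> Rabs (U l y - U l0 y) <= C * Rabs (l - l0).
Proof.
  destruct (family_bounded l0) as [K [HK HB]].
  assert (HQ : 0 <= Q) by (generalize (qt_bound 0) (Rabs_pos (qt 0)); lra).
  set (c := 2 + (Rabs l0 + Q)).
  assert (Hc : 0 <= c) by (unfold c; generalize (Rabs_pos l0); lra).
  assert (HC : 0 <= K ^ 2 * h * exp (c * h))
    by (apply Rmult_le_pos; [apply Rmult_le_pos; [apply pow2_ge_0 | lra] | left; apply exp_pos]).
  exists (sqrt (K ^ 2 * h * exp (c * h))); split; [apply sqrt_pos|].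
  intros l y Hl Hy; rewrite Rmult_comm; apply Rabs_le_mul_sqrt; [exact HC|].
  (* the difference solves the equation for l0, forced by (l - l0) U l *)
  assert (E := energy_estimate (fun s => U l s - U l0 s) (fun s => V l s - V l0 s)
                 (fun s => l0 - qt s) (fun s => (l - l0) * U l s) (Rabs l0 + Q)
                 ((l - l0) ^ 2 * K ^ 2) y).
  assert (Hexp : exp (c * y) <= exp (c * h)) by (apply exp_le_compat; nra).
  assert (Hl2 := pow2_ge_0 (l - l0)). assert (HK2 := pow2_ge_0 K).
  assert (HF : (l - l0) ^ 2 * K ^ 2 * y * exp (c * y) <= (l - l0) ^ 2 * (K ^ 2 * h * exp (c * h))).
  { replace ((l - l0) ^ 2 * (K ^ 2 * h * exp (c * h)))
      with ((l - l0) ^ 2 * K ^ 2 * h * exp (c * h)) by ring.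
    assert (HA : 0 <= (l - l0) ^ 2 * K ^ 2) by (apply Rmult_le_pos; assumption).
    apply Rmult_le_compat; [apply Rmult_le_pos; lra | left; apply exp_pos | | exact Hexp].
    apply Rmult_le_compat_l; lra. }
  assert (Hd : (U l y - U l0 y) ^ 2 + (V l y - V l0 y) ^ 2 <=
               ((l - l0) ^ 2 * K ^ 2 * y) * exp (c * y)).
  { replace ((l - l0) ^ 2 * K ^ 2 * y) with ((U l 0 - U l0 0) ^ 2 + (V l 0 - V l0 0) ^ 2
      + (l - l0) ^ 2 * K ^ 2 * y) by (rewrite !U_0, !V_0; ring).
    apply E; [generalize (Rabs_pos l0); lra | nra | lra | | | |].
    - intros t _; apply (is_derive_minus (U l) (U l0)); apply U_deriv.
    - intros t _.
      replace ((l0 - qt t) * (U l t - U l0 t) + (l - l0) * U l t)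
        with ((l - qt t) * U l t - (l0 - qt t) * U l0 t) by ring.
      apply (is_derive_minus (V l) (V l0)); apply V_deriv.
    - intros t _; apply family_coef_bound.
    - intros t Ht; rewrite Rpow_mult_distr; apply Rmult_le_compat_l; [exact Hl2|].
      assert (HUt := HB l t Hl ltac:(lra)).
      rewrite <- (pow2_abs (U l t)); apply pow_incr; split; [apply Rabs_pos | exact HUt]. }
  generalize (pow2_ge_0 (V l y - V l0 y)); nra.
Qed.

Lemma continuous_family_at l0 y : 0 <= y <= h -> continuous (fun l => U l y) l0.
Proof.
  intros Hy; destruct (family_lipschitz l0) as [C [_ HC]].
  apply (continuous_of_lipschitz_at _ l0 C 1 Rlt_0_1).
  intros l Hl; apply HC; [lra | exact Hy].
Qed.

Lemma continuous_family_overlap l0 :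
  continuous (fun l => RInt (fun y => U l y * U l0 y) 0 h) l0.
Proof.
  destruct (family_bounded l0) as [K [HK HB]]; destruct (family_lipschitz l0) as [C [HC HL]].
  assert (Hcont : forall l z, continuous (fun y => U l y * U l0 y) z).
  { intros l z; apply (continuous_mult (K := R_AbsRing));
      apply (continuous_of_is_derive _ _ _ (U_deriv _ z)). }
  apply (continuous_of_lipschitz_at _ l0 (h * (C * K)) 1 Rlt_0_1); intros l Hl.
  rewrite <- (RInt_minus (V := R_CompleteNormedModule)) by apply ex_RInt_of_continuous, Hcont.
  eapply Rle_trans.
  { apply abs_RInt_le_const with (M := C * Rabs (l - l0) * K); [lra | | ].
    - apply ex_RInt_of_continuous; intros z; apply (continuous_minus (V := R_NormedModule)); apply Hcont.
    - intros y Hy; change (minus ?a ?b) with (a - b).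
      replace (U l y * U l0 y - U l0 y * U l0 y) with ((U l y - U l0 y) * U l0 y) by ring.
      rewrite Rabs_mult; apply Rmult_le_compat; [apply Rabs_pos | apply Rabs_pos | |].
      + apply HL; lra.
      + apply HB; [rewrite Rminus_eq_0, Rabs_R0 | ]; lra. }
  right; rewrite Rminus_0_r; ring.
Qed.

Lemma family_wronskian l l0 :
  V l h * U l0 h - V l0 h * U l h = (l - l0) * RInt (fun y => U l y * U l0 y) 0 h.
Proof.
  assert (Hc : forall x, continuous (fun y => U l y * U l0 y) x).
  { intros x; apply (continuous_mult (K := R_AbsRing));
      apply (continuous_of_is_derive _ _ _ (U_deriv _ x)). }
  assert (Hd : forall x, is_derive (fun y => V l y * U l0 y - V l0 y * U l y) x
                           ((l - l0) * (U l x * U l0 x))).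
  { intros x.
    replace ((l - l0) * (U l x * U l0 x)) with ((l - qt x) * U l x * U l0 x + V l x * V l0 x
      - ((l0 - qt x) * U l0 x * U l x + V l0 x * V l x)) by ring.
    apply (is_derive_minus (fun y => V l y * U l0 y) (fun y => V l0 y * U l y));
      apply (is_derive_mult _ _ x); auto; intros; apply Rmult_comm. }
  assert (HI := is_RInt_derive _ _ 0 h (fun x _ => Hd x)
                  (fun x _ => continuous_scal_r (V := R_NormedModule) (l - l0) _ x (Hc x))).
  change ((l - l0) * RInt (fun y => U l y * U l0 y) 0 h)
    with (scal (l - l0) (RInt (fun y => U l y * U l0 y) 0 h)).
  rewrite <- (RInt_scal (V := R_CompleteNormedModule)) by apply ex_RInt_of_continuous, Hc.
  erewrite (is_RInt_unique _ 0 h); [| exact HI].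
  change (minus ?a ?b) with (a - b); cbv beta; rewrite !U_0; ring.
Qed.

Lemma family_pos_near_0 l : exists d, 0 < d /\ forall y, 0 < y < d -> 0 < U l y.
Proof.
  destruct (pos_right_of_is_derive (U l) 0 1 (U_0 l)) as [d [Hd HU]].
  - rewrite <- (V_0 l); apply U_deriv.
  - lra.
  - exists d; split; [exact Hd|]; intros y Hy; apply HU; lra.
Qed.

Lemma family_square_integral_pos l : 0 < RInt (fun y => U l y * U l y) 0 h.
Proof.
  destruct (family_pos_near_0 l) as [d [Hd Hpos]].
  assert (Hc : forall x, continuous (fun y => U l y * U l y) x).
  { intros x; apply (continuous_mult (K := R_AbsRing));
      apply (continuous_of_is_derive _ _ _ (U_deriv _ x)). }
  set (c := Rmin (d / 2) h).
  assert (Ec1 := Rmin_l (d / 2) h); assert (Ec2 := Rmin_r (d / 2) h).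
  assert (Hc0 : 0 < c) by (apply Rmin_pos; lra).
  rewrite <- (RInt_Chasles (V := R_CompleteNormedModule) _ 0 c h) by apply ex_RInt_of_continuous, Hc.
  change (plus ?a ?b) with (a + b).
  assert (0 < RInt (fun y => U l y * U l y) 0 c).
  { apply RInt_gt_0; [exact Hc0 | | intros; apply Hc].
    intros x Hx; assert (0 < U l x) by (apply Hpos; fold c in Ec1; lra); nra. }
  assert (0 <= RInt (fun y => U l y * U l y) c h).
  { apply RInt_ge_0; [exact Ec2 | apply ex_RInt_of_continuous, Hc | intros; apply Rle_0_sqr]. }
  lra.
Qed.

Lemma is_derive_family_ratio l0 : U l0 h <> 0 ->
  is_derive (fun l => V l h / U l h) l0
    (RInt (fun y => U l0 y * U l0 y) 0 h / (U l0 h * U l0 h)).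
Proof.
  intros Hl0.
  set (g := fun l => RInt (fun y => U l y * U l0 y) 0 h / (U l h * U l0 h)).
  change (is_derive (fun l => V l h / U l h) l0 (g l0)).
  assert (Hch := continuous_family_at l0 h ltac:(lra)).
  apply is_derive_of_difference_quotient.
  - apply (filter_imp (fun l => U l h <> 0)); [| apply locally_neq_0; assumption].
    intros l Hl Hll0; unfold g.
    assert (Hw := family_wronskian l l0).
    field_simplify_eq; [| repeat split; auto; lra].
    rewrite <- Rmult_minus_distr_r, <- Hw; ring.
  - unfold g, Rdiv.
    apply (continuous_mult (K := R_AbsRing)); [apply continuous_family_overlap|].
    apply continuous_Rinv_comp; [| apply Rmult_integral_contrapositive; auto].
    apply (continuous_mult (K := R_AbsRing) (fun l => U l h) (fun _ => U l0 h)); [exact Hch|].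
    apply continuous_const.
Qed.

End ParameterFamily.

Lemma parameter_family_exists (qt : R -> R) (Q : R) :
  (forall x, continuous qt x) -> (forall x, Rabs (qt x) <= Q) ->
  exists U V : R -> R -> R, (forall l x, is_derive (U l) x (V l x)) /\
    (forall l x, is_derive (V l) x ((l - qt x) * U l x)) /\
    (forall l, U l 0 = 0) /\ (forall l, V l 0 = 1).
Proof.
  intros Hc HQ.
  assert (Hex : forall l, exists UV : (R -> R) * (R -> R),
    (forall x, is_derive (fst UV) x (snd UV x)) /\
    (forall x, is_derive (snd UV) x ((l - qt x) * fst UV x)) /\ fst UV 0 = 0 /\ snd UV 0 = 1).
  { intros l.
    destruct (linear_ode_solution_exists (fun x => l - qt x) (Rabs l + Q)) as [U [V HUV]].
    - intros x; apply (continuous_minus (V := R_NormedModule) (fun _ => l)); [apply continuous_const | apply Hc].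
    - intros x; unfold Rminus; eapply Rle_trans; [apply Rabs_triang|].
      rewrite Rabs_Ropp; generalize (HQ x); lra.
    - exists (U, V); exact HUV. }
  exists (fun l => fst (proj1_sig (constructive_indefinite_description _ (Hex l)))),
    (fun l => snd (proj1_sig (constructive_indefinite_description _ (Hex l)))).
  split; [| split; [| split]]; intros l;
    destruct (constructive_indefinite_description _ (Hex l)) as [UV HUV]; simpl; apply HUV.
Qed.

Lemma is_derive_gamma_deriv_h (q qt : R -> R) (h Q t0 : R) :
  0 < h -> 0 < t0 -> (forall y, 0 <= y <= h -> qt y = q y) ->
  (forall x, continuous qt x) -> (forall x, Rabs (qt x) <= Q) ->
  ~ dirichlet_eigenvalue q h (- t0 ^ 2) ->
  exists D, 0 < D /\ is_derive (gamma_deriv_h q h) t0 D.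
Proof.
  intros Hh Ht0 Hq Hc HQ Hne.
  destruct (parameter_family_exists qt Q Hc HQ) as [U [V [HU [HV [HU0 HV0]]]]].
  assert (Hh0 : U (t0 ^ 2) h <> 0).
  { intros E; apply Hne.
    apply (dirichlet_eigenvalue_of_zero q qt h t0 (U (t0 ^ 2)) (V (t0 ^ 2))); auto.
    destruct (family_pos_near_0 U V HU HU0 HV0 (t0 ^ 2)) as [d [Hd Hpos]].
    exists (Rmin (d / 2) h); split.
    - generalize (Rmin_r (d / 2) h); assert (0 < Rmin (d / 2) h) by (apply Rmin_pos; lra); lra.
    - apply Rgt_not_eq, Hpos; generalize (Rmin_l (d / 2) h).
      assert (0 < Rmin (d / 2) h) by (apply Rmin_pos; lra); lra. }
  set (J := RInt (fun y => U (t0 ^ 2) y * U (t0 ^ 2) y) 0 h).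
  assert (HJ : 0 < J) by apply (family_square_integral_pos h U V Hh HU HU0 HV0).
  exists (2 * t0 * (J / (U (t0 ^ 2) h * U (t0 ^ 2) h))); split.
  { apply Rmult_lt_0_compat; [lra|]; apply Rdiv_lt_0_compat; [exact HJ|].
    apply Rsqr_pos_lt, Hh0. }
  assert (Hsq : is_derive (fun t : R => t ^ 2) t0 (2 * t0)) by (auto_derive; auto; ring).
  apply (is_derive_ext_loc (fun t => V (t ^ 2) h / U (t ^ 2) h)).
  - assert (Hcont : continuous (fun t => U (t ^ 2) h) t0).
    { apply (continuous_comp (fun t => t ^ 2) (fun l => U l h)).
      - apply (continuous_of_is_derive _ _ _ Hsq).
      - apply (continuous_family_at h Q qt U V Hh HQ HU HV HU0 HV0); lra. }
    apply (filter_imp (fun t => U (t ^ 2) h <> 0)); [| apply locally_neq_0; assumption].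
    intros t Ht; symmetry.
    apply (gamma_deriv_h_eq q qt h t (U (t ^ 2)) (V (t ^ 2))); auto.
  - apply (is_derive_comp (fun l => V l h / U l h) (fun t => t ^ 2)).
    + apply (is_derive_family_ratio h Q qt U V Hh HQ HU HV HU0 HV0), Hh0.
    + exact Hsq.
Qed.

Theorem mainTheorem6
  (h alpha : R) (omega Psi Psi1 Psi2 : R -> R)
  (Hh : 0 < h) (Halpha : 0 < alpha < 1)
  (Homega : C1alpha alpha omega)
  (HPsi : twice_diff_on 0 h Psi Psi1 Psi2)
  (HPsi_ode : forall y, 0 < y < h -> Psi2 y + omega (Psi y) = 0)
  (HPsi_h : Psi h = 0)
  (Hkappa : Psi1 h <> 0) :
  let q := fun y => Derive omega (Psi y) in
  let kappa := Psi1 h in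
  let rho0 := (1 + Psi1 h * Psi2 h) / (Psi1 h) ^ 2 in
  (0 < kappa ->
     forall tau, 0 < tau -> ~ dirichlet_eigenvalue q h (- tau ^ 2) ->
       exists d, is_derive (dispersion_sigma q h kappa rho0) tau d /\ 0 < d) /\
  (kappa < 0 ->
     forall tau, 0 < tau -> ~ dirichlet_eigenvalue q h (- tau ^ 2) ->
       exists d, is_derive (dispersion_sigma q h kappa rho0) tau d /\ d < 0).
Proof.
  intros q kappa rho0.
  destruct (clamped_extension 0 h q ltac:(lra)) as [qt [Q [Hq [Hqc HQ]]]].
  { intros x; apply (continuous_comp (fun s => Psi (clamp 0 h s)) (Derive omega)).
    - apply (continuous_comp_clamp 0 h Psi Psi1); [lra | intros y Hy; apply HPsi, Hy].
    - apply Homega. }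
  assert (Hsigma : forall tau, 0 < tau -> ~ dirichlet_eigenvalue q h (- tau ^ 2) ->
    exists D, 0 < D /\ is_derive (dispersion_sigma q h kappa rho0) tau (kappa * D)).
  { intros tau Htau Hne.
    destruct (is_derive_gamma_deriv_h q qt h Q tau Hh Htau Hq Hqc HQ Hne) as [D [HD Hd]].
    exists D; split; [exact HD|]; unfold dispersion_sigma.
    replace (kappa * D) with (kappa * (D - 0)) by ring.
    apply is_derive_scal, (is_derive_minus _ (fun _ => rho0)); [exact Hd|].
    apply is_derive_Reals, derivable_pt_lim_const. }
  split; intros Hk tau Htau Hne; destruct (Hsigma tau Htau Hne) as [D [HD Hd]];
    exists (kappa * D); (split; [exact Hd | nra]).
Qed.
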